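(* Let $A, B \subseteq \mathbb{N}$ be oracles, $S_A$ a settled deployed system over $A$, and $S_B$ a settled deployed system over $B$ that is a successor system of $S_A$ (i.e. $A \leq_T B$). Let $D$ be a decision task that is externally essential relative to $S_A$, i.e. there is a set $E$ with $D \leq_T A \oplus E$ and $D \not\leq_T A$. If $S_B$ capability-internalizes $D$, i.e. $D$ is inference-realizable in $S_B$, then $A <_T B$.
   Context: $X \leq_T Y$ means some oracle Turing machine with oracle $Y$ computes the characteristic function of $X$; $A <_T B$ means $A \leq_T B$ and $B \not\leq_T A$; $A \oplus E$ is the join $\{2n : n\in A\}\cup\{2n+1 : n \in E\}$. For an oracle $C$, $\mathcal{C}(C)=\{X : X \leq_T C\}$. A settled deployed system over $C$ is a fixed effective family of procedures each of whose realizable decision tasks lies in $\mathcal{C}(C)$. An inference-time procedure of such a system is any task-realizing procedure obtained by finite composition of procedures already in the family, with no change to the family; a task is inference-realizable in the system if some inference-time procedure realizes (decides) it. *)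

(* sets of naturals as characteristic functions nat -> bool. *)
From Stdlib Require Import Arith List.
Import ListNotations.

(* Programs for partial recursive functions with access to an oracle.
   Arguments are lists of naturals; missing arguments default to 0. *)
Inductive prog : Type :=
| PZero
| PSucc
| PProj (i : nat)
| POracle
| PComp (f : prog) (gs : list prog)
| PRec (f g : prog)            (* h(0::xs)=f xs ; h(S n::xs) = g(n :: h(n::xs) :: xs) *)
| PMu (f : prog).

Inductive eval (Y : nat -> bool) : prog -> list nat -> nat -> Prop :=
| eZero xs : eval Y PZero xs 0
| eSucc xs : eval Y PSucc xs (S (nth 0 xs 0))
| eProj i xs : eval Y (PProj i) xs (nth i xs 0)
| eOracle xs : eval Y POracle xs (if Y (nth 0 xs 0) then 1 else 0)
| eComp f gs xs ys y :
    evals Y gs xs ys -> eval Y f ys y -> eval Y (PComp f gs) xs y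
| eRec0 f g xs y : eval Y f xs y -> eval Y (PRec f g) (0 :: xs) y
| eRecS f g n xs z y :
    eval Y (PRec f g) (n :: xs) z -> eval Y g (n :: z :: xs) y ->
    eval Y (PRec f g) (S n :: xs) y
| eMu f xs n :
    eval Y f (n :: xs) 0 ->
    (forall m, m < n -> exists k, k <> 0 /\ eval Y f (m :: xs) k) ->
    eval Y (PMu f) xs n
with evals (Y : nat -> bool) : list prog -> list nat -> list nat -> Prop :=
| esNil xs : evals Y [] xs []
| esCons g gs xs y ys : eval Y g xs y -> evals Y gs xs ys -> evals Y (g :: gs) xs (y :: ys).

Definition chi (X : nat -> bool) (n : nat) : nat := if X n then 1 else 0.

Definition Treducible (X Y : nat -> bool) : Prop :=
  exists p : prog, forall n, eval Y p [n] (chi X n).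

Definition Tstrict (X Y : nat -> bool) : Prop := Treducible X Y /\ ~ Treducible Y X.

(* A (+) E = {2n | n in A} u {2n+1 | n in E} *)
Definition join (A E : nat -> bool) (n : nat) : bool :=
  if Nat.odd n then E (Nat.div2 n) else A (Nat.div2 n).

(* A procedure: a partial map nat -> nat (None = divergence). *)
Definition procedure := nat -> option nat.

Record system := { family : procedure -> Prop }.

Definition effective_rel (C : nat -> bool) (p : procedure) : Prop :=
  exists q : prog, forall n v, p n = Some v <-> eval C q [n] v.

Inductive composed (fam : procedure -> Prop) : procedure -> Prop :=
| cBase p : fam p -> composed fam p
| cComp f g : composed fam f -> composed fam g ->
    composed fam (fun n => match g n with Some m => f m | None => None end).

Definition decides (p : procedure) (X : nat -> bool) : Prop :=
  forall n, p n = Some (chi X n).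

Definition inference_realizable (S : system) (X : nat -> bool) : Prop :=
  exists p, composed (family S) p /\ decides p X.

Definition settled_over (S : system) (C : nat -> bool) : Prop :=
  (forall p, family S p -> effective_rel C p) /\
  (forall X, inference_realizable S X -> Treducible X C).

Definition externally_essential (A D : nat -> bool) : Prop :=
  (exists E, Treducible D (join A E)) /\ ~ Treducible D A.

(* D is decided by an inference-time procedure of S_B, so settledness gives
   D <=_T B.  If also B <=_T A, transitivity of Turing reducibility would give
   D <=_T A, contradicting external essentiality; hence A <_T B.  Transitivity
   is proved by replacing every oracle query of a program relative to B with a
   call to a program computing B relative to A. *)

From Stdlib Require Import Arith List.
Import ListNotations.

Fixpoint subst_oracle (q p : prog) : prog :=
  match p with
  | POracle => PComp q [PProj 0]
  | PComp f gs => PComp (subst_oracle q f) (map (subst_oracle q) gs)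
  | PRec f g => PRec (subst_oracle q f) (subst_oracle q g)
  | PMu f => PMu (subst_oracle q f)
  | PZero | PSucc | PProj _ => p
  end.

Section SubstOracle.

Variables (X Y : nat -> bool) (q : prog).
Hypothesis q_computes_Y : forall n, eval X q [n] (chi Y n).

(* A direct structural recursion: the premise of [eMu] quantifies over
   evaluations under an existential, where the generated induction scheme
   provides no induction hypothesis. *)
Fixpoint eval_subst_oracle p xs y (H : eval Y p xs y) {struct H} :
  eval X (subst_oracle q p) xs y
with evals_subst_oracle gs xs ys (H : evals Y gs xs ys) {struct H} :
  evals X (map (subst_oracle q) gs) xs ys.
Proof.
  - destruct H as [| | | xs | f gs xs ys y Hgs Hf | f g xs y Hf
                  | f g n xs z y Hn Hg | f xs n Hn Hlt]; simpl.
    + constructor.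
    + constructor.
    + constructor.
    + apply eComp with [nth 0 xs 0].
      * repeat constructor.
      * apply q_computes_Y.
    + apply eComp with ys.
      * exact (evals_subst_oracle _ _ _ Hgs).
      * exact (eval_subst_oracle _ _ _ Hf).
    + exact (eRec0 _ _ _ _ _ (eval_subst_oracle _ _ _ Hf)).
    + exact (eRecS _ _ _ _ _ _ _ (eval_subst_oracle _ _ _ Hn)
               (eval_subst_oracle _ _ _ Hg)).
    + apply eMu; [exact (eval_subst_oracle _ _ _ Hn) |].
      intros m Hm; destruct (Hlt m Hm) as [k [Hk Hfk]].
      exists k; split; [exact Hk | exact (eval_subst_oracle _ _ _ Hfk)].
  - destruct H as [| g gs xs y ys Hg Hgs]; simpl; constructor.
    + exact (eval_subst_oracle _ _ _ Hg).
    + exact (evals_subst_oracle _ _ _ Hgs).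
Qed.

End SubstOracle.

Lemma Treducible_trans (X Y Z : nat -> bool) :
  Treducible X Y -> Treducible Y Z -> Treducible X Z.
Proof.
  intros [p Hp] [q Hq].
  exists (subst_oracle q p); intro n.
  apply (eval_subst_oracle Z Y q Hq), Hp.
Qed.

Lemma Tstrict_of_separating_set (A B X : nat -> bool) :
  Treducible A B -> Treducible X B -> ~ Treducible X A -> Tstrict A B.
Proof.
  intros HAB HXB HXA; split; [exact HAB |].
  intro HBA; apply HXA, (Treducible_trans X B A); assumption.
Qed.

Lemma settled_realizable_Treducible (S : system) (C X : nat -> bool) :
  settled_over S C -> inference_realizable S X -> Treducible X C.
Proof. intros [_ Hreal]; apply Hreal. Qed.

Theorem mainTheorem8 (A B : nat -> bool) (SA SB : system) (D : nat -> bool) :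
  settled_over SA A ->
  settled_over SB B ->
  Treducible A B ->
  (exists E, Treducible D (join A E)) ->
  ~ Treducible D A ->
  inference_realizable SB D ->
  Tstrict A B.
Proof.
  intros _ HSB HAB _ HDA HD.
  apply (Tstrict_of_separating_set A B D HAB); [| exact HDA].
  exact (settled_realizable_Treducible SB B D HSB HD).
Qed.
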